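(* Let $G$ be a finite simple graph on $[d]$, $k\ge1$, and let $f,g$ be $k$-colorings of an induced subgraph $G_0$ of $G$. The following are equivalent: (i) $f\sim_k g$ (as $k$-colorings of $G_0$); (ii) ${\bf x}_f-{\bf x}_g\in\langle [I_G]_2\rangle$; (iii) ${\bf x}_f-{\bf x}_g\in J_G$.
   Context: A $k$-coloring of a graph $H$ is a map $f:V(H)\to[k]$ (not necessarily surjective) with $f(u)\neq f(v)$ for every edge. A Kempe switching: for colors $i<j$ and a connected component $C$ of $H[f^{-1}(i)\cup f^{-1}(j)]$, interchange $i$ and $j$ on $C$. $f\sim_k g$ if $g$ is obtained from $f$ by a finite sequence of Kempe switchings (through $k$-colorings of $H$). A stable set of $G$ is a subset of $[d]$ with no edge of $G$ (including $\emptyset$ and singletons); $S(G)$ is the set of stable sets; $R[G]=\mathbb{K}[x_S : S\in S(G)]$ over a field $\mathbb{K}$, all variables of degree $1$. For a $k$-coloring $f$ of an induced subgraph $G[W]$, ${\bf x}_f=\prod_{\ell=1}^k x_{f^{-1}(\ell)}$. $I_G$ is the kernel of $\pi:R[G]\to\mathbb{K}[t_1,\dots,t_d,s]$, $\pi(x_S)=s\prod_{j\in S}t_j$; $\langle [I_G]_2\rangle$ is the ideal generated by the degree-$2$ homogeneous elements of $I_G$. $J_G$ is the ideal generated by all ${\bf x}_f-{\bf x}_g$ with $f,g$ $2$-colorings of a common induced subgraph of $G$. *)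

From HB Require Import structures.
From mathcomp Require Import all_boot all_order all_algebra.
From mathcomp Require Import mpoly.
From Stdlib Require Import Relations.
Set Implicit Arguments. Unset Strict Implicit. Unset Printing Implicit Defensive.
Import GRing.Theory.
Local Open Scope ring_scope.

(* A finite simple graph G on [d] is a symmetric irreflexive relation
   e : rel 'I_d (vertex j+1 of the paper is the ordinal j). *)

Section Defs.
Variables (d : nat) (e : rel 'I_d).

Definition stableb (S : {set 'I_d}) : bool :=
  [forall u, forall v, (u \in S) && (v \in S) ==> ~~ e u v].

Definition stable_set := {S : {set 'I_d} | stableb S}.

Definition nS := #|{: stable_set}|.

(* R[G] = K[x_S : S in S(G)] *)
Definition RG (K : fieldType) := {mpoly K[nS]}.

(* the variable x_S; for a non-stable set A (never used below) the junk value 0 *)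
Definition xvar (K : fieldType) (A : {set 'I_d}) : {mpoly K[nS]} :=
  if insub A is Some S0 then 'X_(enum_rank (S0 : stable_set)) else 0.

(* f : 'I_d -> 'I_k is a k-coloring of the induced subgraph G[W]
   (only its values on W are relevant) *)
Definition coloring (k : nat) (W : {set 'I_d}) (f : 'I_d -> 'I_k) : Prop :=
  forall u v, u \in W -> v \in W -> e u v -> f u != f v.

Definition xmon (K : fieldType) (k : nat) (W : {set 'I_d}) (f : 'I_d -> 'I_k)
  : {mpoly K[nS]} :=
  \prod_(l < k) xvar K [set v in W | f v == l].

(* the map pi : R[G] -> K[t_1..t_d, s]; t_j = 'X_(widen j), s = 'X_(ord_max) *)
Definition pi_img (K : fieldType) (S0 : stable_set) : {mpoly K[d.+1]} :=
  'X_(@ord_max d) * \prod_(j in val S0) 'X_(widen_ord (leqnSn d) j).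

Definition pi (K : fieldType) (p : {mpoly K[nS]}) : {mpoly K[d.+1]} :=
  comp_mpoly [tuple pi_img K (enum_val i) | i < nS] p.

Definition in_IG (K : fieldType) (p : {mpoly K[nS]}) : Prop := pi p = 0.

Definition IG2 (K : fieldType) (p : {mpoly K[nS]}) : Prop :=
  p \is 2.-homog /\ in_IG p.

Definition JG_gen (K : fieldType) (p : {mpoly K[nS]}) : Prop :=
  exists (W : {set 'I_d}) (f g : 'I_d -> 'I_2),
    [/\ coloring W f, coloring W g & p = xmon K W f - xmon K W g].

End Defs.

Definition in_ideal_gen (R : comNzRingType) (P : R -> Prop) (x : R) : Prop :=
  exists (n : nat) (c g : 'I_n -> R),
    (forall i, P (g i)) /\ x = \sum_(i < n) c i * g i.

Section Kempe.
Variables (d : nat) (e : rel 'I_d) (k : nat) (W : {set 'I_d}).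

(* one Kempe switching of the k-coloring f of G[W], yielding g (on W):
   colors i < j, C a connected component of G[W][f^-1(i) u f^-1(j)]
   (the component of some vertex x of that subgraph), colors i,j swapped on C *)
Definition kempe_step (f g : 'I_d -> 'I_k) : Prop :=
  exists (i j : 'I_k) (x : 'I_d),
    let V := [set v in W | (f v == i) || (f v == j)] in
    let C := [set y | connect [rel u v | [&& u \in V, v \in V & e u v]] x y] in
    [/\ (i < j)%N, x \in V,
        forall v, v \in W ->
          g v = if v \in C then (if f v == i then j else i) else f v
      & coloring e W g].

(* f ~_k g : g is obtained from f by finitely many Kempe switchings
   (equality of colorings of G[W] = agreement on W) *)
Definition kempe_equiv (f g : 'I_d -> 'I_k) : Prop :=
  exists2 h, clos_refl_trans _ kempe_step f h & {in W, h =1 g}.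

End Kempe.

From Pilot Require Import Defs.
From HB Require Import structures.
From mathcomp Require Import all_boot all_order all_algebra all_fingroup.
From mathcomp Require Import mpoly.
From mathcomp Require Import zify.
From mathcomp Require boolp.
From Stdlib Require Import Relations.
Set Implicit Arguments. Unset Strict Implicit. Unset Printing Implicit Defensive.
Import GRing.Theory.

(* (i) -> (iii): a Kempe switching only recolors, within two colors a and b,
   the vertices colored a or b.  Hence x_f - x_g is the product of the
   variables of the other color classes with the binomial of the two
   2-colorings of the subgraph spanned by the colors a and b.
   (iii) -> (ii): the binomial x_f' - x_g' of two 2-colorings of G[W'] is
   homogeneous of degree 2, and pi maps both of its monomials to
   s^2 prod_(j in W') t_j.
   (ii) -> (i): conversely, any recoloring within two colors a and b is a
   sequence of Kempe switchings, since on each Kempe chain two proper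
   2-colorings either agree or are swapped.  If two degree-2 monomials
   x_A x_B and x_C x_D have the same image under pi, the stable sets C, D
   cover every vertex as often as A, B do; so when A, B are two color classes
   of some h ~_k f, recoloring A u B along C, D stays in the Kempe class.
   Let Phi be the linear form summing the coefficients at the monomials
   x_h, h ~_k f.  For q in [I_G]_2, Phi(x^m q) is then a linear form in
   pi(q) = 0, so Phi vanishes on <[I_G]_2>.  Then Phi(x_f - x_g) =
   1 - Phi(x_g) = 0 gives h ~_k f with x_h = x_g: g is h up to a permutation
   of the colors, and transposing two colors is again a recoloring within two
   colors. *)

Section IdealGen.
Local Open Scope ring_scope.
Variables (R : comNzRingType) (P : R -> Prop).

Lemma in_ideal_gen0 : in_ideal_gen P 0.
Proof. by exists 0%N, (fun _ => 0), (fun _ => 0); split; [case | rewrite big_ord0]. Qed.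

Lemma in_ideal_gen_mul c p : P p -> in_ideal_gen P (c * p).
Proof. by move=> Pp; exists 1%N, (fun _ => c), (fun _ => p); rewrite big_ord1. Qed.

Lemma in_ideal_genD x y :
  in_ideal_gen P x -> in_ideal_gen P y -> in_ideal_gen P (x + y).
Proof.
case=> n1 [c1 [g1 [P1 ->]]] [n2 [c2 [g2 [P2 ->]]]].
pose glue (F1 : 'I_n1 -> R) (F2 : 'I_n2 -> R) (i : 'I_(n1 + n2)) :=
  match split i with inl a => F1 a | inr b => F2 b end.
exists (n1 + n2)%N, (glue c1 c2), (glue g1 g2); split.
  by move=> i; rewrite /glue; case: (split i).
by rewrite big_split_ord /glue; congr (_ + _); apply: eq_bigr => i _;
  [rewrite (unsplitK (inl _ i)) | rewrite (unsplitK (inr _ i))].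
Qed.

Lemma in_ideal_gen_sub (Q : R -> Prop) x :
  (forall y, P y -> Q y) -> in_ideal_gen P x -> in_ideal_gen Q x.
Proof. by move=> PQ [n [c [g [Pg ->]]]]; exists n, c, g; split=> // i; apply: PQ. Qed.

End IdealGen.

Section Transposition.
Variable T : finType.
Implicit Types a b c : T.

Lemma tperm_pair a b c :
  ((tperm a b c == a) || (tperm a b c == b)) = ((c == a) || (c == b)).
Proof. by case: tpermP => [->|->|//]; rewrite !eqxx ?orbT. Qed.

Lemma tperm_pairE a b c :
  (c == a) || (c == b) -> tperm a b c = if c == a then b else a.
Proof. by case/orP=> /eqP->; rewrite ?tpermL ?tpermR ?eqxx //; case: eqP => [->|]. Qed.

Lemma tperm_pair_neq a b c c' : (c == a) || (c == b) ->
  (c' == a) || (c' == b) -> c != c' -> c' = tperm a b c.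
Proof. by do 2![case/orP=> /eqP->]; rewrite ?eqxx // ?tpermL ?tpermR. Qed.

End Transposition.

Section Monomials.
Variable n : nat.
Implicit Types m : 'X_{1..n}.

Lemma mdeg_eq2 m : mdeg m = 2 -> exists a b, m = (U_(a) + U_(b))%MM.
Proof.
move=> m2; have [a ma | m0] := pickP (fun i => m i != 0); last first.
  by move: m2; rewrite mdegE big1 // => i _; apply/eqP/negbFE/m0.
have aLm : (U_(a) <= m)%MM by rewrite lep1mP.
have /mdeg1P[b /eqP mb] : mdeg (m - U_(a)) == 1.
  by move: m2; rewrite -{1}(submK aLm) mdegD mdeg1 addn1 => -[->].
by exists b, a; rewrite -mb submK.
Qed.

Lemma sum_mnm1_mem k (Q : pred 'I_k) (F : 'I_k -> 'I_n) m a :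
  (\sum_(l | Q l) U_(F l))%MM = (m + U_(a))%MM -> exists2 l, Q l & F l = a.
Proof.
move=> /(congr1 (fun m' : 'X_{1..n} => m' a)).
rewrite /= mnm_sumE mnmDE mnm1E eqxx addn1.
have [l /andP[Ql /eqP Fl] | noF] := pickP (fun l => Q l && (F l == a)).
  by exists l.
by rewrite big1 // => l Ql; rewrite mnm1E; have := noF l; rewrite /= Ql /= => ->.
Qed.

Lemma sum_mnm1_split2 k (F : 'I_k -> 'I_n) m a b :
  (\sum_l U_(F l))%MM = (m + U_(a) + U_(b))%MM ->
  exists la lb, [/\ la != lb, F la = a, F lb = b &
                    (\sum_(l | (l != la) && (l != lb)) U_(F l))%MM = m].
Proof.
rewrite -addmA [(U_(a) + _)%MM]addmC addmA => sumF.
have [la _ Fla] := sum_mnm1_mem sumF.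
move: sumF; rewrite (bigD1 la) //= Fla addmC => /addIm sumF.
have [lb lbla Flb] := sum_mnm1_mem sumF.
move: sumF; rewrite (bigD1 lb) //= Flb addmC => /addIm sumF.
by exists la, lb; rewrite eq_sym.
Qed.

End Monomials.

Section StableSets.
Variables (d : nat) (e : rel 'I_d).
Local Notation n := (nS e).

Lemma stable_set0 : stableb e set0.
Proof. by apply/forallP=> u; apply/forallP=> v; rewrite inE. Qed.

Lemma stable_adj (A : {set 'I_d}) u v : stableb e A -> u \in A -> v \in A -> ~~ e u v.
Proof. by move=> /forallP/(_ u)/forallP/(_ v)/implyP sA uA vA; apply: sA; rewrite uA. Qed.

(* the index of the variable x_A; for a non-stable A, that of x_set0 *)
Definition stable_rank (A : {set 'I_d}) : 'I_n :=
  enum_rank (insubd (exist _ set0 stable_set0 : stable_set e) A).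

Lemma xvarE K A : stableb e A -> xvar e K A = 'X_(stable_rank A).
Proof. by move=> sA; rewrite /xvar /stable_rank /insubd insubT. Qed.

Lemma stable_rankK A : stableb e A -> val (enum_val (stable_rank A)) = A.
Proof. by move=> sA; rewrite /stable_rank enum_rankK /insubd insubT. Qed.

Lemma stable_rank_inj A B :
  stableb e A -> stableb e B -> stable_rank A = stable_rank B -> A = B.
Proof. by move=> sA sB eqAB; rewrite -(stable_rankK sA) -(stable_rankK sB) eqAB. Qed.

Lemma stable_rank_val (i : 'I_n) : stable_rank (val (enum_val i)) = i.
Proof.
rewrite /stable_rank /insubd insubT ?(valP (enum_val i)) // => s.
by rewrite -[RHS]enum_valK; congr enum_rank; apply: val_inj.
Qed.

Variables (k : nat) (W : {set 'I_d}).
Implicit Types h : 'I_d -> 'I_k.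

Definition color_class h (l : 'I_k) := [set v in W | h v == l].

Definition xmon_exp h : 'X_{1..n} := (\sum_(l < k) U_(stable_rank (color_class h l)))%MM.

Lemma color_class_stable h l : coloring e W h -> stableb e (color_class h l).
Proof.
move=> hc; apply/forallP=> u; apply/forallP=> v; apply/implyP; rewrite !inE.
case/andP=> /andP[uW /eqP hu] /andP[vW /eqP hv]; apply/negP=> euv.
by have := hc u v uW vW euv; rewrite hu hv eqxx.
Qed.

Lemma color_class_eq_in h h' l : {in W, h =1 h'} -> color_class h l = color_class h' l.
Proof. by move=> E; apply/setP=> v; rewrite !inE; case vW: (v \in W); rewrite // E. Qed.

Lemma xmon_exp_eq_in h h' : {in W, h =1 h'} -> xmon_exp h = xmon_exp h'.
Proof. by move=> E; apply: eq_bigr => l _; rewrite (color_class_eq_in l E). Qed.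

Lemma xmon_eq_in K h h' : {in W, h =1 h'} -> xmon e K W h = xmon e K W h'.
Proof.
by move=> E; apply: eq_bigr => l _; rewrite -!/(color_class _ _) (color_class_eq_in l E).
Qed.

Lemma xmonE K h : coloring e W h -> xmon e K W h = 'X_[xmon_exp h].
Proof.
move=> hc; rewrite /xmon /xmon_exp.
rewrite (big_morph (fun m => 'X_[m] : {mpoly K[n]}) (@mpolyXD _ _) (@mpolyX0 _ _)).
by apply: eq_bigr => l _; rewrite xvarE //; apply: color_class_stable.
Qed.

End StableSets.

Section Kempe.
Variables (d : nat) (e : rel 'I_d).
Hypothesis e_sym : ssrbool.symmetric e.
Variables (k : nat) (W : {set 'I_d}).
Implicit Types (f g h : 'I_d -> 'I_k) (a b l : 'I_k) (x : 'I_d).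

Local Notation kstep := (kempe_step e W).
Local Notation krt := (clos_refl_trans _ kstep).
Local Notation kequiv := (kempe_equiv e W).
Local Notation col := (coloring e W).
Local Notation xmon_exp := (xmon_exp e W).

Lemma coloring_eq_in h h' : {in W, h =1 h'} -> col h -> col h'.
Proof. by move=> E hc u v uW vW euv; rewrite -!E //; apply: hc. Qed.

Lemma kempe_step_eq_in f f' g : {in W, f =1 f'} -> kstep f g -> kstep f' g.
Proof.
move=> E [i [j [x]]] /= [ij xV gE gc].
have EV : [set v in W | (f v == i) || (f v == j)] =
          [set v in W | (f' v == i) || (f' v == j)].
  by apply/setP=> v; rewrite !inE; case vW: (v \in W); rewrite // E.
by exists i, j, x => /=; rewrite -EV; split=> // v vW; rewrite gE // E.
Qed.

Lemma kempe_rt_eq_in f g f' : krt f g -> {in W, f =1 f'} ->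
  exists2 g', krt f' g' & {in W, g =1 g'}.
Proof.
move=> fg; elim: fg f' => {f g} [f g st | f | f g h _ IH1 _ IH2] f' E.
- by exists g; [apply/rt_step/(kempe_step_eq_in E) |].
- by exists f'; [apply: rt_refl |].
- have [g' fg' E1] := IH1 _ E; have [h' gh' E2] := IH2 _ E1.
  by exists h'; [apply: rt_trans gh' |].
Qed.

Lemma kempe_rt_coloring f g : krt f g -> col f -> col g.
Proof. by elim=> // [f0 g0 [i [j [x]]] /= [] | f0 g0 h0 _ IH1 _ IH2 /IH1 /IH2]. Qed.

Lemma kempe_equiv_refl f : kequiv f f.
Proof. by exists f; [apply: rt_refl |]. Qed.

Lemma kempe_step_equiv f g : kstep f g -> kequiv f g.
Proof. by move=> st; exists g; [apply: rt_step |]. Qed.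

Lemma kempe_equiv_eq_in f g g' : {in W, g =1 g'} -> kequiv f g -> kequiv f g'.
Proof. by move=> E' [h fh E]; exists h => // v vW; rewrite E // E'. Qed.

Lemma kempe_equiv_trans f g h : kequiv f g -> kequiv g h -> kequiv f h.
Proof.
case=> g0 fg0 E0 [h0 gh0 E1].
have [h1 g0h1 E2] := kempe_rt_eq_in gh0 (fun v vW => esym (E0 v vW)).
by exists h1; [apply: rt_trans g0h1 | move=> v vW; rewrite -E2 // E1].
Qed.

Lemma kempe_equiv_coloring f g : kequiv f g -> col f -> col g.
Proof. by case=> h fh E /(kempe_rt_coloring fh); apply: coloring_eq_in. Qed.

Definition bicolored h a b := [set v in W | (h v == a) || (h v == b)].

Definition kempe_adj h a b :=
  [rel u v | [&& u \in bicolored h a b, v \in bicolored h a b & e u v]].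

Definition kempe_chain h a b x := [set y | connect (kempe_adj h a b) x y].

Definition kempe_switch h a b x : 'I_d -> 'I_k :=
  fun v => if v \in kempe_chain h a b x then tperm a b (h v) else h v.

Lemma bicoloredC h a b : bicolored h a b = bicolored h b a.
Proof. by apply/setP=> v; rewrite !inE orbC. Qed.

Lemma kempe_chainC h a b x : kempe_chain h a b x = kempe_chain h b a x.
Proof. by rewrite /kempe_chain /kempe_adj bicoloredC. Qed.

Lemma kempe_switchC h a b x : kempe_switch h a b x = kempe_switch h b a x.
Proof. by rewrite /kempe_switch kempe_chainC tpermC. Qed.

Lemma kempe_chain_sub h a b x :
  x \in bicolored h a b -> kempe_chain h a b x \subset bicolored h a b.
Proof.
have closedV : closed (kempe_adj h a b) (bicolored h a b) by move=> u v /and3P[-> ->].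
by move=> xV; apply/subsetP=> y; rewrite inE => /(closed_connect closedV) <-.
Qed.

Lemma kempe_chain_adj h a b x u v : x \in bicolored h a b ->
  u \in kempe_chain h a b x -> v \in bicolored h a b -> e u v ->
  v \in kempe_chain h a b x.
Proof.
move=> xV uC vV euv; have uV := subsetP (kempe_chain_sub xV) u uC.
by move: uC; rewrite !inE => xu; apply: connect_trans xu (connect1 _); apply/and3P.
Qed.

Lemma kempe_switch_coloring h a b x :
  col h -> x \in bicolored h a b -> col (kempe_switch h a b x).
Proof.
move=> hc xV; set C := kempe_chain h a b x.
have cross u v : u \in W -> v \in W -> e u v -> u \in C -> v \notin C ->
    tperm a b (h u) != h v.
  move=> uW vW euv uC vC.
  have hu : (h u == a) || (h u == b).
    by have := subsetP (kempe_chain_sub xV) u uC; rewrite inE uW.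
  have hv : ~~ ((h v == a) || (h v == b)).
    by apply: contra vC => hv; apply: kempe_chain_adj uC _ euv; rewrite // inE vW.
  by apply: contra hv => /eqP <-; rewrite tperm_pair.
move=> u v uW vW euv; rewrite /kempe_switch -/C.
case uC: (u \in C); case vC: (v \in C).
- by rewrite (inj_eq perm_inj); apply: hc.
- by apply: cross; rewrite ?vC.
- by rewrite eq_sym; apply: cross; rewrite ?uC // e_sym.
- exact: hc.
Qed.

Lemma kempe_step_switch h a b x :
  col h -> a != b -> x \in bicolored h a b -> kstep h (kempe_switch h a b x).
Proof.
wlog ab : a b / (a < b)%N => [hwlog hc ab xV | hc _ xV].
  case: (ltngtP a b) => [lt | gt | /val_inj eq_ab]; first exact: hwlog.
    by rewrite kempe_switchC; apply: hwlog; rewrite // 1?eq_sym // -bicoloredC.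
  by rewrite eq_ab eqxx in ab.
exists a, b, x; split=> //; last exact: kempe_switch_coloring.
move=> v vW; rewrite /kempe_switch; case: ifP => // vC.
by apply: tperm_pairE; have := subsetP (kempe_chain_sub xV) v vC; rewrite inE vW.
Qed.

Definition two_recoloring a b h h' :=
  {in W, forall v, if (h v == a) || (h v == b) then (h' v == a) || (h' v == b)
                   else h' v == h v}.

Lemma kempe_step_two_recoloring h h' :
  kstep h h' -> exists a b, a != b /\ two_recoloring a b h h'.
Proof.
case=> a [b [x]] /= [ab xV h'E _]; exists a, b; split; first by rewrite neq_ltn ab.
have {}h'E : {in W, forall v, h' v =
    if v \in kempe_chain h a b x then (if h v == a then b else a) else h v} := h'E.
move=> v vW; rewrite h'E //; case vC: (v \in kempe_chain h a b x).
  have := subsetP (kempe_chain_sub xV) v vC; rewrite inE vW /= => ->.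
  by case: (h v == a); rewrite eqxx ?orbT.
by case: ifP => //; rewrite eqxx.
Qed.

Lemma two_recoloring_between a b h h1 h' : two_recoloring a b h h' ->
  {in W, forall v, h1 v = h v \/ h1 v = h' v} -> two_recoloring a b h1 h'.
Proof. by move=> hh' E v vW; case: (E v vW) => ->; [apply: hh' | case: ifP]. Qed.

Lemma two_recoloring_color_class a b h h' l : two_recoloring a b h h' ->
  l != a -> l != b -> color_class W h' l = color_class W h l.
Proof.
move=> hh' la lb; apply/setP=> v; rewrite !inE; case vW: (v \in W) => //=.
have := hh' v vW; case: ifP => [hv h'v | _ /eqP->] //.
by apply/idP/idP => /eqP E; [move: h'v | move: hv]; rewrite E (negbTE la) (negbTE lb).
Qed.

Lemma two_recoloring_bicolored a b h h' :
  two_recoloring a b h h' -> bicolored h' a b = bicolored h a b.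
Proof.
move=> hh'; apply/setP=> v; rewrite !inE; case vW: (v \in W) => //=.
by have := hh' v vW; case: ifP => [_ -> | hv /eqP->].
Qed.

Lemma two_recoloring_coloring a b h h' : col h -> two_recoloring a b h h' ->
  coloring e (bicolored h a b) h' -> col h'.
Proof.
move=> hc hh' h'c u v uW vW euv.
have inV w : w \in W -> (w \in bicolored h a b) = (h w == a) || (h w == b).
  by rewrite inE => ->.
have := hh' u uW; have := hh' v vW.
case hu: ((h u == a) || (h u == b)); case hv: ((h v == a) || (h v == b)).
- by move=> _ _; apply: h'c; rewrite ?inV.
- by move=> /eqP-> h'u; apply: (contraNneq _ (negbT hv)) => <-.
- by move=> h'v /eqP->; apply: (contraNneq _ (negbT hu)) => ->.
- by move=> /eqP-> /eqP->; apply: hc.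
Qed.

(* h and h' are proper 2-colorings of the connected chain and differ at x,
   so they differ everywhere on it *)
Lemma kempe_chain_two_recoloring h h' a b x :
  col h -> col h' -> two_recoloring a b h h' -> x \in W -> h x != h' x ->
  {in kempe_chain h a b x, forall v, h' v = tperm a b (h v)}.
Proof.
move=> hc h'c hh' xW hx.
set D := [set v in bicolored h a b | h v != h' v].
have inD v : v \in D -> [/\ v \in W, (h v == a) || (h v == b),
    (h' v == a) || (h' v == b) & h v != h' v].
  by rewrite !inE => /andP[/andP[vW hv] hv']; have := hh' v vW; rewrite hv.
have closedD : closed (kempe_adj h a b) D.
  apply: intro_closed => [|u v /and3P[_ vV euv] /inD[uW hu h'u huv]].
    by apply: sym_connect_sym => u v; rewrite /= e_sym andbCA.
  move: vV; rewrite inE => /andP[vW hv]; rewrite !inE vW hv /=.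
  have h'v : (h' v == a) || (h' v == b) by have := hh' v vW; rewrite hv.
  have hvE : h v = tperm a b (h u) by apply: tperm_pair_neq => //; apply: hc.
  have h'uE : h' u = tperm a b (h u) by apply: tperm_pair_neq.
  by rewrite hvE -h'uE; apply: h'c.
have xD : x \in D.
  rewrite inE hx andbT inE xW /=; apply: contraNT hx => hx.
  by have := hh' x xW; rewrite (negbTE hx) eq_sym.
move=> v; rewrite inE => /(closed_connect closedD).
by rewrite xD => /esym /inD[_ hv h'v]; apply: tperm_pair_neq.
Qed.

Lemma kempe_equiv_two_recoloring a b h h' :
  col h -> col h' -> a != b -> two_recoloring a b h h' -> kequiv h h'.
Proof.
move=> + h'c ab; have [N] := ubnP #|[set v in W | h v != h' v]|.
elim: N h => // N IH h ltDN hc hh'.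
set D := [set v in W | h v != h' v] in ltDN.
have [D0 | [x xD]] := set_0Vmem D.
  apply: kempe_equiv_eq_in (kempe_equiv_refl h) => v vW; apply/eqP.
  by apply: contraT => hv; move: (in_set0 v); rewrite -D0 inE vW hv.
move: (xD); rewrite inE => /andP[xW hx].
have xV : x \in bicolored h a b.
  rewrite inE xW /=; apply: contraNT hx => hx.
  by have := hh' x xW; rewrite (negbTE hx) eq_sym.
set h1 := kempe_switch h a b x.
have h'E := kempe_chain_two_recoloring hc h'c hh' xW hx.
have h1E v : h1 v = h v \/ h1 v = h' v.
  by rewrite /h1 /kempe_switch; case: ifP => [/h'E|]; [right | left].
apply: kempe_equiv_trans (kempe_step_equiv (kempe_step_switch hc ab xV)) _.
apply: IH; last exact: two_recoloring_between (in1W h1E).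
  have D1x : [set v in W | h1 v != h' v] \subset D :\ x.
    apply/subsetP=> v; rewrite !inE /h1 /kempe_switch.
    case: ifP => [/h'E-> | vC]; first by rewrite eqxx andbF.
    move=> /andP[vW hv]; rewrite vW hv !andbT.
    by apply: contraFN vC => /eqP->; rewrite inE connect0.
  have := subset_leq_card D1x; have := cardsD1 x D; rewrite xD -/h1; lia.
exact: kempe_switch_coloring.
Qed.

Lemma kempe_equiv_exchange h la lb (C D : {set 'I_d}) :
  col h -> la != lb -> stableb e C -> stableb e D ->
  (forall t, (t \in C) + (t \in D) =
             (t \in color_class W h la) + (t \in color_class W h lb))%N ->
  exists h', [/\ kequiv h h', col h', color_class W h' la = C,
                 color_class W h' lb = D &
                 forall l, l != la -> l != lb -> color_class W h' l = color_class W h l].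
Proof.
move=> hc lab sC sD sumCD.
have CD t : ((t \in C) || (t \in D) = (t \in W) && ((h t == la) || (h t == lb)))
            /\ ~~ ((t \in C) && (t \in D)).
  move: (sumCD t); rewrite !inE; case: (t \in W); case: (eqVneq (h t) la) => [->|];
    rewrite ?(negbTE lab) //=; case: (t \in C); case: (t \in D); case: (h t == lb) => //.
pose h' v := if v \in C then la else if v \in D then lb else h v.
have hh' : two_recoloring la lb h h'.
  move=> v vW; have [cd _] := CD v; rewrite vW /= in cd; rewrite /h' -cd.
  by case: (v \in C); case: (v \in D); rewrite /= ?eqxx ?orbT.
have h'c : col h'.
  apply: two_recoloring_coloring hc hh' _ => u v uV vV euv.
  rewrite !inE -(proj1 (CD u)) -(proj1 (CD v)) in uV vV.
  rewrite /h'; case uC: (u \in C); case vC: (v \in C) => /=.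
  - by have := stable_adj sC uC vC; rewrite euv.
  - by rewrite vC /= in vV; rewrite vV.
  - by rewrite uC /= in uV; rewrite uV eq_sym.
  - by rewrite uC vC /= in uV vV; have := stable_adj sD uV vV; rewrite euv.
have outside v : ~~ ((v \in C) || (v \in D)) ->
    (v \in W) && (h v == la) = false /\ (v \in W) && (h v == lb) = false.
  rewrite (proj1 (CD v)) negb_and negb_or.
  by case: (v \in W) => //= /andP[/negbTE-> /negbTE->].
have CDW v : (v \in C) || (v \in D) -> v \in W by rewrite (proj1 (CD v)) => /andP[].
exists h'; split=> //.
- exact: kempe_equiv_two_recoloring hc h'c lab hh'.
- apply/setP=> v; rewrite !inE /h'; case vC: (v \in C); first by rewrite eqxx CDW ?vC.
  case vD: (v \in D); first by rewrite eq_sym (negbTE lab) andbF.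
  by rewrite (proj1 (outside v _)) // vC vD.
- apply/setP=> v; rewrite !inE /h'; case vC: (v \in C).
    by have := proj2 (CD v); rewrite vC (negbTE lab) andbF /= => /negbTE->.
  case vD: (v \in D); first by rewrite eqxx CDW ?vD ?orbT.
  by rewrite (proj2 (outside v _)) // vC vD.
- by move=> l lla llb; apply: two_recoloring_color_class hh' lla llb.
Qed.

Lemma coloring_tperm a b h : col h -> col (tperm a b \o h).
Proof. by move=> hc u v uW vW euv; rewrite /= (inj_eq perm_inj); apply: hc. Qed.

Lemma two_recoloring_tperm a b h : two_recoloring a b h (tperm a b \o h).
Proof.
move=> v vW /=; rewrite tperm_pair; case: ifP => // /norP[ha hb].
by rewrite tpermD // eq_sym.
Qed.

Lemma color_class_tperm a b h l :
  color_class W (tperm a b \o h) l = color_class W h (tperm a b l).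
Proof. by apply/setP=> v; rewrite !inE /= (can2_eq (tpermK a b) (tpermK a b)). Qed.

Lemma xmon_exp_tperm a b h : xmon_exp (tperm a b \o h) = xmon_exp h.
Proof.
rewrite /xmon_exp; under eq_bigr do rewrite color_class_tperm.
by rewrite [RHS](reindex_inj (@perm_inj _ (tperm a b))).
Qed.

Lemma xmon_exp_color_class h g v : col h -> col g ->
  xmon_exp h = xmon_exp g -> v \in W -> color_class W h (h v) = color_class W g (g v).
Proof.
move=> hc gc hg vW; move: hg; rewrite [RHS](bigD1 (g v)) //= addmC.
case/sum_mnm1_mem=> c _ /(stable_rank_inj (color_class_stable _ hc)).
move=> /(_ (color_class_stable _ gc)) cls_c.
suff : v \in color_class W h c by rewrite inE => /andP[_ /eqP->].
by rewrite cls_c inE vW eqxx.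
Qed.

(* induction on the number of color classes of h that are not classes of g:
   swapping the colors h v and g v of a vertex v where h and g differ turns
   one more class into a class of g *)
Lemma kempe_equiv_xmon_exp h g : col h -> col g -> xmon_exp h = xmon_exp g -> kequiv h g.
Proof.
move=> + gc; have [N] := ubnP #|[set l | color_class W h l != color_class W g l]|.
elim: N h => // N IH h ltMN hc hg; set M := [set l | _] in ltMN.
have [v /andP[vW hgv] | hg_eq] := pickP (fun v => (v \in W) && (h v != g v)); last first.
  apply: kempe_equiv_eq_in (kempe_equiv_refl h) => v vW.
  by apply/eqP; have := hg_eq v; rewrite /= vW => /negbFE.
set a := h v in hgv *; set b := g v in hgv *.
have clsE := xmon_exp_color_class hc gc hg vW; rewrite -/a -/b in clsE.
have notin_cls f l : f v != l -> v \notin color_class W f l by rewrite inE vW.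
have aM : a \in M.
  have gva : g v != a by rewrite eq_sym.
  by rewrite inE; apply: contraNneq (notin_cls g a gva) => <-; rewrite inE vW eqxx.
have bM : b \in M.
  by rewrite inE; apply: contraNneq (notin_cls h b hgv) => ->; rewrite inE vW eqxx.
set h' := tperm a b \o h.
have M'sub : [set l | color_class W h' l != color_class W g l] \subset M :\ b.
  apply/subsetP=> l; rewrite !inE color_class_tperm.
  case: (eqVneq l b) => [-> | lb]; first by rewrite tpermR clsE eqxx.
  case: (eqVneq l a) => [-> | la]; first by move: aM; rewrite inE.
  by rewrite tpermD // 1?eq_sym.
have h'c := coloring_tperm a b hc.
apply: kempe_equiv_trans (IH h' _ h'c _).
- exact: kempe_equiv_two_recoloring hc h'c hgv (two_recoloring_tperm a b h).
- by have := subset_leq_card M'sub; have := cardsD1 b M; rewrite bM; lia.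
- by rewrite xmon_exp_tperm.
Qed.

End Kempe.

HB.instance Definition _ (K : fieldType) (d : nat) (e : rel 'I_d) :=
  GRing.RMorphism.copy (@Defs.pi d e K)
    (comp_mpoly [tuple pi_img K (enum_val i) | i < nS e]).

Section Binomials.
Local Open Scope ring_scope.
Variables (K : fieldType) (d : nat) (e : rel 'I_d).
Local Notation n := (nS e).
Local Notation xvar := (xvar e K).
Local Notation pi := (@Defs.pi d e K).
Local Notation widen := (widen_ord (leqnSn d)).

Lemma xmon_2coloring (W : {set 'I_d}) (h : 'I_d -> 'I_2) :
  xmon e K W h = xvar (color_class W h ord0) * xvar (color_class W h ord_max).
Proof. by rewrite /xmon big_ord_recl big_ord1; congr (_ * xvar _); apply/setP=> v. Qed.

Lemma pi_xvar A : stableb e A ->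
  pi (xvar A) = 'X_(@ord_max d) * \prod_(j in A) 'X_(widen j).
Proof.
move=> sA; rewrite xvarE // /Defs.pi comp_mpolyXU -tnth_nth tnth_mktuple.
by rewrite /pi_img stable_rankK.
Qed.

Lemma pi_xmon_2coloring (W : {set 'I_d}) (h : 'I_d -> 'I_2) : coloring e W h ->
  pi (xmon e K W h) = 'X_(@ord_max d) ^+ 2 * \prod_(j in W) 'X_(widen j).
Proof.
move=> hc; rewrite xmon_2coloring rmorphM /=.
rewrite !pi_xvar ?color_class_stable // mulrACA -expr2 -bigU /=.
  have ord2 (c : 'I_2) : (c == ord0) || (c == ord_max) by case: c => [[|[|]]].
  by congr (_ * _); apply: eq_bigl => v; rewrite !inE -andb_orr ord2 andbT.
rewrite -setI_eq0; apply/eqP/setP => v; rewrite !inE.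
by apply/negbTE/andP => -[/andP[_ /eqP->] /andP[]].
Qed.

Lemma xmon_2coloring_homog (W : {set 'I_d}) (h : 'I_d -> 'I_2) :
  coloring e W h -> xmon e K W h \is 2.-homog.
Proof.
move=> hc; rewrite xmon_2coloring !xvarE ?color_class_stable // -mpolyXD dhomogX.
by rewrite /= mdegD !mdeg1.
Qed.

Lemma JG_gen_IG2 p : JG_gen (e := e) (K := K) p -> IG2 (e := e) (K := K) p.
Proof.
case=> W [f [g [fc gc ->]]]; split; first by rewrite rpredB ?xmon_2coloring_homog.
by rewrite /in_IG rmorphB /= !pi_xmon_2coloring // subrr.
Qed.

Variables (k : nat) (W : {set 'I_d}).
Implicit Types (f g h : 'I_d -> 'I_k) (a b : 'I_k).
Local Notation col := (coloring e W).
Local Notation JI := (in_ideal_gen (JG_gen (e := e) (K := K))).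

Definition bicoloring h a : 'I_d -> 'I_2 := fun v => if h v == a then ord0 else ord_max.

Lemma bicoloring_coloring h a b : col h -> coloring e (bicolored W h a b) (bicoloring h a).
Proof.
move=> hc u v; rewrite !inE /bicoloring => /andP[uW hu] /andP[vW hv] euv.
have := hc u v uW vW euv.
case: (eqVneq (h u) a) => [hua | ua]; case: (eqVneq (h v) a) => [hva | va] //=.
  by rewrite hua hva eqxx.
by move: hu hv; rewrite (negbTE ua) (negbTE va) /= => /eqP-> /eqP->; rewrite eqxx.
Qed.

Lemma xmon_bicoloring h a b : a != b ->
  xmon e K (bicolored W h a b) (bicoloring h a) =
  xvar (color_class W h a) * xvar (color_class W h b).
Proof.
have o01 : (ord0 == ord_max :> 'I_2) = false by [].
have o10 : (ord_max == ord0 :> 'I_2) = false by [].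
move=> ab; rewrite xmon_2coloring; congr (xvar _ * xvar _); apply/setP=> v;
  rewrite !inE /bicoloring; case: (v \in W); case: (eqVneq (h v) a) => [->|] //=.
- by move=> _; rewrite o10 andbF.
- by rewrite o01 (negbTE ab).
- by move=> _; rewrite eqxx andbT.
Qed.

Lemma xmon_split2 h a b : a != b ->
  xmon e K W h = xvar (color_class W h a) * xvar (color_class W h b) *
                 \prod_(l | (l != a) && (l != b)) xvar (color_class W h l).
Proof. by move=> ab; rewrite /xmon (bigD1 a) //= (bigD1 b) 1?eq_sym //= mulrA. Qed.

Lemma two_recoloring_JG a b h h' : col h -> col h' -> a != b ->
  two_recoloring W a b h h' -> JI (xmon e K W h - xmon e K W h').
Proof.
move=> hc h'c ab hh'; rewrite !(xmon_split2 _ ab) -(xmon_bicoloring h ab).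
rewrite -(xmon_bicoloring h' ab) (two_recoloring_bicolored hh').
under [X in _ - _ * X]eq_bigr => l /andP[la lb]
  do rewrite (two_recoloring_color_class hh' la lb).
rewrite -mulrBl mulrC; apply: in_ideal_gen_mul.
exists (bicolored W h a b), (bicoloring h a), (bicoloring h' a); split=> //.
  exact: bicoloring_coloring.
by rewrite -(two_recoloring_bicolored hh'); apply: bicoloring_coloring.
Qed.

Lemma kempe_equiv_JG f g : kempe_equiv e W f g -> col f -> JI (xmon e K W f - xmon e K W g).
Proof.
case=> h fh /(xmon_eq_in e K) <- {g}.
elim: fh => {f h} [f h fh | f | f g h fg IHfg gh IHgh] fc.
- have [a [b [ab fh']]] := kempe_step_two_recoloring fh.
  apply: (two_recoloring_JG fc _ ab fh').
  exact: kempe_equiv_coloring (kempe_step_equiv fh) fc.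
- by rewrite subrr; apply: in_ideal_gen0.
- rewrite -[_ - _](subrKA (xmon e K W g)); apply: in_ideal_genD; first exact: IHfg.
  by apply: IHgh; apply: kempe_rt_coloring fg fc.
Qed.

End Binomials.

Section CoefficientSum.
Local Open Scope ring_scope.
Variables (K : fieldType) (n : nat).

Definition mcoeff_sum (L : seq 'X_{1..n}) (P : pred 'X_{1..n}) (p : {mpoly K[n]}) : K :=
  \sum_(m <- undup L | P m) p@_m.

Lemma mcoeff_sum_is_linear L P : linear_for *%R (mcoeff_sum L P).
Proof.
move=> c p q; rewrite /mcoeff_sum mulr_sumr -big_split.
by apply: eq_bigr => m _; rewrite mcoeffD mcoeffZ.
Qed.

HB.instance Definition _ L P := GRing.isLinear.Build K {mpoly K[n]} K *%R
  (mcoeff_sum L P) (mcoeff_sum_is_linear L P).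

Lemma mcoeff_sumX L P m : mcoeff_sum L P 'X_[m] = ((m \in L) && P m)%:R.
Proof.
rewrite /mcoeff_sum -big_filter (eq_bigr (fun m' => (if m' == m then 1 else 0)%N%:R)).
  rewrite -natr_sum -big_mkcond sum1_count /=.
  by rewrite (count_uniq_mem _ (filter_uniq _ (undup_uniq L))) mem_filter mem_undup andbC.
by move=> m' _; rewrite mcoeffX eq_sym; case: (m' == m).
Qed.

Lemma scalar_ideal_gen_eq0 (phi : {scalar {mpoly K[n]}}) (Q : {mpoly K[n]} -> Prop) p :
  (forall m q, Q q -> phi ('X_[m] * q) = 0) -> in_ideal_gen Q p -> phi p = 0.
Proof.
move=> phiQ [N [c [g [Qg ->]]]]; rewrite linear_sum big1 // => i _.
rewrite (mpolyE (c i)) mulr_suml linear_sum big1 // => m _.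
by rewrite -scalerAl linearZ /= phiQ ?mulr0.
Qed.

End CoefficientSum.

Section PiExponent.
Local Open Scope ring_scope.
Variables (K : fieldType) (d : nat) (e : rel 'I_d).
Local Notation n := (nS e).
Local Notation pi := (@Defs.pi d e K).
Local Notation widen := (widen_ord (leqnSn d)).
Local Notation stable_of i := (val (@enum_val (stable_set e) _ i)).

Definition stable_exp (A : {set 'I_d}) : 'X_{1..d.+1} :=
  (U_(ord_max) + \sum_(j in A) U_(widen j))%MM.

Definition pi_exp (m : 'X_{1..n}) : 'X_{1..d.+1} :=
  (\sum_(i < n) stable_exp (stable_of i) *+ m i)%MM.

Lemma pi_img_mpolyX (S : stable_set e) : pi_img K S = 'X_[stable_exp (val S)].
Proof.
rewrite /pi_img /stable_exp mpolyXD.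
by rewrite (big_morph (fun m => 'X_[m] : {mpoly K[d.+1]}) (@mpolyXD _ _) (@mpolyX0 _ _)).
Qed.

Lemma pi_mpolyX m : pi 'X_[m] = 'X_[pi_exp m].
Proof.
rewrite /Defs.pi comp_mpolyX /pi_exp.
rewrite (big_morph (fun m => 'X_[m] : {mpoly K[d.+1]}) (@mpolyXD _ _) (@mpolyX0 _ _)).
by apply: eq_bigr => i _; rewrite tnth_mktuple -mpolyXn pi_img_mpolyX.
Qed.

Lemma pi_mpolyE p : pi p = \sum_(m <- msupp p) p@_m *: 'X_[pi_exp m].
Proof. by rewrite {1}/Defs.pi comp_mpolyEX; apply: eq_bigr => m _; rewrite -pi_mpolyX. Qed.

Lemma pi_expD m1 m2 : pi_exp (m1 + m2) = (pi_exp m1 + pi_exp m2)%MM.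
Proof.
apply/mnmP=> j; rewrite mnmDE !mnm_sumE -big_split.
by apply: eq_bigr => i _; rewrite !mulmnE mnmDE mulnDr.
Qed.

Lemma pi_exp_mnm1 (i : 'I_n) : pi_exp U_(i) = stable_exp (stable_of i).
Proof.
apply/mnmP=> j; rewrite mnm_sumE (bigD1 i) //= mulmnE mnm1E eqxx muln1 big1 ?addn0 //.
by move=> i' /negbTE i'i; rewrite mulmnE mnm1E eq_sym i'i muln0.
Qed.

Lemma stable_exp_widen A t : stable_exp A (widen t) = (t \in A).
Proof.
rewrite mnmDE mnm1E mnm_sumE.
have -> : (ord_max == widen t) = false.
  by apply/negbTE; rewrite -val_eqE /= neq_ltn ltn_ord orbT.
rewrite add0n (eq_bigr (fun j => (j == t) : nat)); last by move=> j _; rewrite mnm1E -val_eqE.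
case tA: (t \in A); first by rewrite (bigD1 t) //= eqxx big1 // => j /andP[_ /negbTE->].
by rewrite big1 // => j jA; case: eqP => // jt; rewrite -jt jA in tA.
Qed.

Lemma pi_exp_mnm1D_widen (a b : 'I_n) t :
  pi_exp (U_(a) + U_(b)) (widen t) = ((t \in stable_of a) + (t \in stable_of b))%N.
Proof. by rewrite pi_expD !pi_exp_mnm1 mnmDE !stable_exp_widen. Qed.

End PiExponent.

Section KempeForm.
Local Open Scope ring_scope.
Variables (K : fieldType) (d : nat) (e : rel 'I_d).
Hypothesis e_sym : ssrbool.symmetric e.
Variables (k : nat) (W : {set 'I_d}) (f : 'I_d -> 'I_k).
Local Notation n := (nS e).
Local Notation pi := (@Defs.pi d e K).
Local Notation widen := (widen_ord (leqnSn d)).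

Definition kempe_class_exp (m : 'X_{1..n}) : Prop :=
  exists h, [/\ coloring e W h, kempe_equiv e W f h & xmon_exp e W h = m].

Lemma kempe_class_exp_exchange m (n0 n1 : 'X_{1..n}) : kempe_class_exp (m + n0)%MM ->
  mdeg n0 = 2 -> mdeg n1 = 2 -> pi_exp n0 = pi_exp n1 -> kempe_class_exp (m + n1)%MM.
Proof.
move=> [h [hc fh hm]] /mdeg_eq2[a [b n0E]] /mdeg_eq2[a' [b' ->]].
move: hm; rewrite n0E addmA => /sum_mnm1_split2[la [lb [lab ra rb rest]]] pi_ab.
have sumE t : ((t \in val (enum_val a')) + (t \in val (enum_val b')) =
               (t \in color_class W h la) + (t \in color_class W h lb))%N.
  have := congr1 (fun m : 'X_{1..d.+1} => m (widen t)) pi_ab.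
  rewrite /= !pi_exp_mnm1D_widen -ra -rb.
  by rewrite !(stable_rankK (color_class_stable _ hc)) => /esym.
have [h' [hh' h'c h'la h'lb h'l]] :=
  kempe_equiv_exchange e_sym hc lab (valP (enum_val a')) (valP (enum_val b')) sumE.
exists h'; split=> //; first exact: kempe_equiv_trans fh hh'.
rewrite /xmon_exp (bigD1 la) //= (bigD1 lb) 1?eq_sym //= h'la h'lb !stable_rank_val.
under eq_bigr => l /andP[lla llb] do rewrite h'l //.
by rewrite rest addmA addmC.
Qed.

Definition kempe_form : {scalar {mpoly K[n]}} :=
  mcoeff_sum [seq xmon_exp e W h | h : {ffun 'I_d -> 'I_k}]
             (fun m => boolp.asbool (kempe_class_exp m)).

Lemma kempe_formX m : kempe_form 'X_[m] = (boolp.asbool (kempe_class_exp m))%:R.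
Proof.
rewrite /kempe_form /= mcoeff_sumX.
case: boolp.asboolP => [[h [_ _ <-]] | _]; last by rewrite andbF.
suff -> : xmon_exp e W h \in [seq xmon_exp e W h0 | h0 : {ffun 'I_d -> 'I_k}] by [].
apply/imageP; exists (finfun h) => //.
by apply: xmon_exp_eq_in => v _; rewrite ffunE.
Qed.

(* on a degree-2 monomial n0, membership of m + n0 in the Kempe class only
   depends on pi_exp n0, so kempe_form ('X_[m] * q) is a linear form in pi q *)
Lemma kempe_form_IG2 m q : IG2 (e := e) (K := K) q -> kempe_form ('X_[m] * q) = 0.
Proof.
case=> q2 piq.
pose chi mu :=
  boolp.asbool (exists n0, [/\ mdeg n0 = 2, pi_exp n0 = mu & kempe_class_exp (m + n0)%MM]).
have chiE n0 : n0 \in msupp q -> boolp.asbool (kempe_class_exp (m + n0)%MM) = chi (pi_exp n0).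
  move=> n0q; have n02 := dhomog_mf q2 n0q.
  apply/boolp.asboolP/boolp.asboolP => [mn0 | [n1 [n12 pin mn1]]]; first by exists n0.
  exact: kempe_class_exp_exchange mn1 n12 n02 pin.
transitivity (mcoeff_sum [seq pi_exp n0 | n0 <- msupp q] chi (pi q)); last first.
  by rewrite piq linear0.
rewrite pi_mpolyE {1}(mpolyE q) mulr_sumr !linear_sum; apply: eq_big_seq => n0 n0q.
by rewrite -scalerAr -mpolyXD !linearZ /= kempe_formX mcoeff_sumX map_f // chiE.
Qed.

Lemma IG2_kempe_equiv g : coloring e W f -> coloring e W g ->
  in_ideal_gen (IG2 (e := e) (K := K)) (xmon e K W f - xmon e K W g) ->
  kempe_equiv e W f g.
Proof.
move=> fc gc /(scalar_ideal_gen_eq0 kempe_form_IG2).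
rewrite !xmonE // linearB /= !kempe_formX.
case: boolp.asboolP => [_ | []]; last by exists f; split=> //; apply: kempe_equiv_refl.
case: boolp.asboolP => [[h [hc fh hg]] _ | _ /eqP]; last by rewrite subr0 oner_eq0.
exact: kempe_equiv_trans fh (kempe_equiv_xmon_exp e_sym hc gc hg).
Qed.

End KempeForm.

Local Open Scope ring_scope.

Theorem theorem5p1 (K : fieldType) (d : nat) (e : rel 'I_d)
  (e_sym : ssrbool.symmetric e) (e_irr : ssrbool.irreflexive e)
  (k : nat) (k_ge1 : (0 < k)%N) (W : {set 'I_d}) (f g : 'I_d -> 'I_k)
  (f_col : coloring e W f) (g_col : coloring e W g) :
  (kempe_equiv e W f g <->
     in_ideal_gen (IG2 (e := e) (K := K)) (xmon e K W f - xmon e K W g)) /\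
  (in_ideal_gen (IG2 (e := e) (K := K)) (xmon e K W f - xmon e K W g) <->
     in_ideal_gen (JG_gen (e := e) (K := K)) (xmon e K W f - xmon e K W g)).
Proof.
have JG_IG2 := in_ideal_gen_sub (@JG_gen_IG2 K d e).
have kempe_JG (fg : kempe_equiv e W f g) := kempe_equiv_JG K fg f_col.
have IG2_kempe := IG2_kempe_equiv (K := K) e_sym f_col g_col.
split; split.
- by move/kempe_JG/JG_IG2.
- exact: IG2_kempe.
- by move/IG2_kempe/kempe_JG.
- exact: JG_IG2.
Qed.
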